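(* Let $N\ge3$ and let $K=[-1/N,1/N]\times[-N,N]\subseteq\mathbb R^2$ and $T=[-N,N]\times[-1/N,1/N]\subseteq\mathbb R^2$. Then \[ \gamma_2(\mathrm{conv}\{K\cup T\})\,\gamma_2(K\cap T)<\gamma_2(K)\,\gamma_2(T). \]
   Context: $\gamma_2$ denotes the standard Gaussian probability measure on $\mathbb R^2$, with density proportional to $e^{-\|x\|^2/2}$. $\mathrm{conv}\{S\}$ is the convex hull of $S$. *)

From HB Require Import structures.
From mathcomp Require Import all_boot all_order all_algebra.
From mathcomp Require Import all_classical all_reals all_analysis.
Set Implicit Arguments. Unset Strict Implicit. Unset Printing Implicit Defensive.
Import Order.TTheory GRing.Theory Num.Theory.
Local Open Scope classical_set_scope.
Local Open Scope ring_scope.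

Definition gamma2 {R : realType} : set (R * R) -> \bar R :=
  ((@normal_prob R 0 1) \x (@normal_prob R 0 1))%E.

Definition convex_hull {R : realType} (S : set (R * R)) : set (R * R) :=
  [set x | exists (n : nat) (w : 'I_n -> R) (p : 'I_n -> R * R),
      (forall i, 0 <= w i) /\ \sum_(i < n) w i = 1 /\ (forall i, S (p i)) /\
      x = (\sum_(i < n) w i * (p i).1, \sum_(i < n) w i * (p i).2)].

Definition rect {R : realType} (a b c d : R) : set (R * R) :=
  [set p | a <= p.1 <= b /\ c <= p.2 <= d].

From HB Require Import structures.
From mathcomp Require Import all_boot all_order all_algebra.
From mathcomp Require Import all_classical all_reals all_analysis.
From mathcomp Require Import measurable_realfun ring lra.
Import Order.TTheory GRing.Theory Num.Theory.
Local Open Scope classical_set_scope.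
Local Open Scope ring_scope.

(* Every point of the convex hull of K u T satisfies x + y <= N + 1/N < 2N - 2,
   so the hull avoids the corner square [N-1, N]^2 of [-N, N]^2.  Writing
   a, b, c for the N(0,1)-masses of [-1/N, 1/N], [-N, N] and [N-1, N], this gives
   gamma2(hull) * gamma2(K n T) <= (b^2 - c^2) a^2 < (ab)(ba) = gamma2(K) gamma2(T). *)

(* No measurability is needed: both sides are suprema over simple functions. *)
Lemma ge0_le_integralT d (T : measurableType d) (R : realType)
    (mu : {measure set T -> \bar R}) (f g : T -> \bar R) :
  (forall x, 0 <= f x)%E -> (forall x, f x <= g x)%E ->
  (\int[mu]_x f x <= \int[mu]_x g x)%E.
Proof.
move=> f0 fg.
have g0 x : (0 <= g x)%E by exact: le_trans (f0 x) (fg x).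
rewrite !ge0_integralTE //.
apply: ereal_sup_le => _ [h hf <-]; exists h => //= x.
exact: le_trans (hf x) (fg x).
Qed.

Lemma normal_prob_le (R : realType) (m s : R) (A B : set R) : A `<=` B ->
  (normal_prob m s A <= normal_prob m s B)%E.
Proof.
move=> AB; rewrite /normal_prob integral_mkcond [leRHS]integral_mkcond.
apply: ge0_le_integralT => x; rewrite /patch.
  by case: ifP => _ //; rewrite lee_fin normal_pdf_ge0.
case: ifP => [/set_mem/AB/mem_set -> // | _].
by case: ifP => _ //; rewrite lee_fin normal_pdf_ge0.
Qed.

Lemma gamma2_le {R : realType} {A B : set (R * R)} : A `<=` B ->
  (gamma2 A <= gamma2 B)%E.
Proof.
move=> AB; apply: ge0_le_integralT => x /=; first exact: measure_ge0.
by apply: normal_prob_le => y; rewrite /xsection /= !inE; apply: AB.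
Qed.

Lemma rectE (R : realType) (a b c d : R) : rect a b c d = `[a, b] `*` `[c, d].
Proof. by apply/seteqP; split => -[x y]; rewrite /rect /= !in_itv. Qed.

Lemma gamma2_rect (R : realType) (a b c d : R) :
  gamma2 (rect a b c d) = (normal_prob 0 1 `[a, b] * normal_prob 0 1 `[c, d])%E.
Proof. by rewrite rectE /gamma2 product_measure1E. Qed.

Lemma normal_prob_fineE {R : realType} (A : set R) : measurable A ->
  normal_prob 0 1 A = (fine (normal_prob 0 1 A))%:E.
Proof.
move=> mA; have A_le1 : (normal_prob 0 1 A <= 1)%E by exact: probability_le1.
by rewrite fineK // ge0_fin_numE ?measure_ge0 // (le_lt_trans A_le1) ?ltry.
Qed.

Lemma sqr_le_max_sqr {R : realDomainType} (x y z : R) : x <= z <= y ->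
  z ^+ 2 <= x ^+ 2 + y ^+ 2.
Proof.
move=> /andP[xz zy]; have x2 := sqr_ge0 x; have y2 := sqr_ge0 y.
have [z0|z0] := leP 0 z.
  have : 0 <= (y - z) * (y + z) by apply: mulr_ge0; lra.
  by rewrite !expr2 in x2 y2 *; lra.
have : 0 <= (z - x) * (- z - x) by apply: mulr_ge0; lra.
by rewrite !expr2 in x2 y2 *; lra.
Qed.

(* The density is bounded below on [x, y] by its value at max(|x|, |y|). *)
Lemma normal_prob_itv_gt0 {R : realType} (x y : R) : x < y ->
  (0 < normal_prob 0 1 `[x, y])%E.
Proof.
move=> xy.
pose m : R := normal_peak 1 * expR (- (x ^+ 2 + y ^+ 2) / 2).
have m_gt0 : 0 < m by rewrite mulr_gt0 ?expR_gt0 ?normal_peak_gt0.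
apply: (@lt_le_trans _ _ (\int[lebesgue_measure]_(z in `[x, y]) (cst m%:E) z)%E).
  rewrite integral_cst //= lebesgue_measure_itv /= lte_fin xy.
  by rewrite -EFinB -EFinM lte_fin mulr_gt0 // subr_gt0.
apply: ge0_le_integral => //=.
- by move=> z _; rewrite lee_fin ltW.
- by apply/measurable_EFinP; apply: measurable_funTS; exact: measurable_normal_pdf.
- move=> z /[!in_itv] /= xzy.
  rewrite lee_fin /normal_pdf oner_eq0 /m ler_pM2l ?normal_peak_gt0 //.
  rewrite /normal_fun ler_expR subr0 expr1n.
  have := @sqr_le_max_sqr R x y z xzy; lra.
Qed.

Lemma convex_hull_sub_halfplane (R : realType) (S : set (R * R)) (al be c : R) :
  (forall q, S q -> al * q.1 + be * q.2 <= c) ->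
  convex_hull S `<=` [set q | al * q.1 + be * q.2 <= c].
Proof.
move=> Sc _ [n [w [p [w0 [w1 [Sp ->]]]]]] /=.
rewrite !big_distrr -big_split /=.
apply: (@le_trans _ _ (\sum_(i < n) w i * c)).
  apply: ler_sum => i _.
  by rewrite mulrCA [be * _]mulrCA -mulrDr ler_wpM2l ?Sc.
by rewrite -big_distrl /= w1 mul1r.
Qed.

Lemma invf_bounds_ge3 {R : realFieldType} {N : R} : 3 <= N -> 0 < N^-1 < 1.
Proof. by move=> N_ge3; rewrite invr_gt0 invf_lt1; [apply/andP; split|]; lra. Qed.

Lemma setI_cross_rect {R : realType} (N : R) : 3 <= N ->
  rect (- N^-1) N^-1 (- N) N `&` rect (- N) N (- N^-1) N^-1 =
  rect (- N^-1) N^-1 (- N^-1) N^-1.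
Proof.
move=> N_ge3; have /andP[? ?] := invf_bounds_ge3 N_ge3.
apply/seteqP; split => -[u v]; rewrite /rect /=.
  by move=> [[/andP[? ?] /andP[? ?]] [/andP[? ?] /andP[? ?]]];
    split; apply/andP; split; lra.
by move=> [/andP[? ?] /andP[? ?]]; split; split; apply/andP; split; lra.
Qed.

Lemma convex_hull_cross_sub {R : realType} (N : R) : 3 <= N ->
  convex_hull (rect (- N^-1) N^-1 (- N) N `|` rect (- N) N (- N^-1) N^-1)
  `<=` rect (- N) N (- N) N `\` rect (N - 1) N (N - 1) N.
Proof.
move=> N_ge3; have /andP[? ?] := invf_bounds_ge3 N_ge3.
set S := _ `|` _.
have Sq q : S q -> [/\ - N <= q.1 <= N, - N <= q.2 <= N & q.1 + q.2 <= N + N^-1].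
  case: q => u v; rewrite /S /rect /= => -[] [/andP[? ?] /andP[? ?]];
    by split; try (apply/andP; split); lra.
move=> q hq.
have hull al be c : (forall p, S p -> al * p.1 + be * p.2 <= c) ->
    al * q.1 + be * q.2 <= c.
  by move=> Sc; exact: (@convex_hull_sub_halfplane R S al be c Sc q hq).
have := hull 1 0 N ltac:(move=> ? /Sq[/andP[? ?] /andP[? ?] ?]; lra).
have := hull (-1) 0 N ltac:(move=> ? /Sq[/andP[? ?] /andP[? ?] ?]; lra).
have := hull 0 1 N ltac:(move=> ? /Sq[/andP[? ?] /andP[? ?] ?]; lra).
have := hull 0 (-1) N ltac:(move=> ? /Sq[/andP[? ?] /andP[? ?] ?]; lra).
have := hull 1 1 (N + N^-1) ltac:(move=> ? /Sq[/andP[? ?] /andP[? ?] ?]; lra).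
move=> ? ? ? ? ?; split; rewrite /rect /=.
  by split; apply/andP; split; lra.
by move=> [/andP[? ?] /andP[? ?]]; lra.
Qed.

Lemma gamma2_setD_rect (R : realType) (a b c d a' b' c' d' : R) :
  rect a' b' c' d' `<=` rect a b c d ->
  gamma2 (rect a b c d `\` rect a' b' c' d') =
    (gamma2 (rect a b c d) - gamma2 (rect a' b' c' d'))%E.
Proof.
move=> sub; rewrite /gamma2 measureD ?(setIidr sub) //;
  try by rewrite rectE; apply: measurableX.
change (gamma2 (rect a b c d) < +oo)%E; rewrite gamma2_rect.
by rewrite (normal_prob_fineE `[a, b]) // (normal_prob_fineE `[c, d]) //
  -EFinM ltry.
Qed.

Lemma lt_mul_sqr_sub {R : realFieldType} {g a b c : R} :
  0 < a -> 0 < c -> g <= b * b - c * c -> g * (a * a) < a * b * (b * a).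
Proof.
move=> a_gt0 c_gt0 gbc.
have : g * (a * a) <= (b * b - c * c) * (a * a) by rewrite ler_pM2r ?mulr_gt0.
have : 0 < (c * c) * (a * a) by rewrite !mulr_gt0.
have -> : a * b * (b * a) = b * b * (a * a) by ring.
rewrite mulrBl; lra.
Qed.

Theorem mainTheorem8 (R : realType) (N : R) (hN : 3 <= N) :
  let K := rect (- N^-1) N^-1 (- N) N in
  let T := rect (- N) N (- N^-1) N^-1 in
  (gamma2 (convex_hull (setU K T)) * gamma2 (setI K T) < gamma2 K * gamma2 T)%E.
Proof.
have /andP[invN_gt0 invN_lt1] := invf_bounds_ge3 hN.
have corner_sub : rect (N - 1) N (N - 1) N `<=` rect (- N) N (- N) N.
  by move=> [u v]; rewrite /rect /= => -[/andP[? ?] /andP[? ?]];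
    split; apply/andP; split; lra.
have hull_le := gamma2_le (convex_hull_cross_sub N hN).
rewrite gamma2_setD_rect // !gamma2_rect in hull_le.
have hull_ge0 : (0 <= gamma2 (convex_hull
    (rect (- N^-1) N^-1 (- N) N `|` rect (- N) N (- N^-1) N^-1)))%E.
  exact: measure_ge0.
have a_gt0 := @normal_prob_itv_gt0 _ (- N^-1) N^-1 ltac:(lra).
have c_gt0 := @normal_prob_itv_gt0 _ (N - 1) N ltac:(lra).
move: hull_le hull_ge0 a_gt0 c_gt0; rewrite /= setI_cross_rect // !gamma2_rect.
rewrite (normal_prob_fineE `[- N^-1, N^-1]) //.
rewrite (normal_prob_fineE `[- N, N]) //.
rewrite (normal_prob_fineE `[N - 1, N]) //.
set g := gamma2 _ => hull_le hull_ge0.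
have g_fin : g = (fine g)%:E.
  by rewrite fineK // ge0_fin_numE // (le_lt_trans hull_le) ?ltry.
rewrite g_fin -!EFinM -EFinB lee_fin in hull_le; rewrite g_fin.
rewrite -!EFinM !lte_fin => a_gt0 c_gt0.
by apply: lt_mul_sqr_sub hull_le.
Qed.
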